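(* Let $\beta\in(0,1)$, let $U_1\ge U_2\ge\dots\ge U_K$ be real numbers in $[0,1]$, and let $L\in\mathbb N$ be even. For a sequence $\mathbf A=(A_0,\dots,A_{L-1})\in[K]^L$ let $V(\mathbf A)=\sum_{s=0}^{L-1}\beta^sU_{A_s}$, and for a permutation $\sigma$ of $\{0,\dots,L-1\}$ let $V(\sigma,\mathbf A)=\sum_{s=0}^{L-1}\beta^sU_{A_{\sigma(s)}}$ (the value of the reordered sequence). Then for every $\mathbf A\in[K]^L$, $$\max_{\sigma}V(\sigma,\mathbf A)\le V(\mathbf A)+\frac{(1-\beta^L)^2}{1-\beta},$$ the maximum being over all permutations (reorderings) of $\mathbf A$.
   Context: In the paper, $U_k=u^i(a^i_k,w^{-i})$ is the expected stage utility of action $a^i_k$ of player $i$ against a fixed opponents' mixed profile, with utilities valued in $[0,1]$ and actions indexed so that $U_1\ge\dots\ge U_K$. *)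

From mathcomp Require Import all_boot all_order all_algebra all_fingroup.
Set Implicit Arguments. Unset Strict Implicit. Unset Printing Implicit Defensive.
Import Order.TTheory GRing.Theory Num.Theory.
Local Open Scope ring_scope.

(* V(A) = sum_{s<L} beta^s U_{A_s}; actions [K] are indexed by 'I_K (0-based). *)
Definition Vseq (R : realFieldType) (K L : nat) (beta : R) (U : 'I_K -> R)
  (A : 'I_L -> 'I_K) : R :=
  \sum_(s < L) beta ^+ s * U (A s).

Definition Vperm (R : realFieldType) (K L : nat) (beta : R) (U : 'I_K -> R)
  (sigma : 'S_L) (A : 'I_L -> 'I_K) : R :=
  \sum_(s < L) beta ^+ s * U (A (sigma s)).

From mathcomp Require Import all_boot all_order all_algebra all_fingroup.
From mathcomp Require Import ring.

Set Implicit Arguments.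
Unset Strict Implicit.
Unset Printing Implicit Defensive.
Import Order.TTheory GRing.Theory Num.Theory.
Local Open Scope ring_scope.

(* A reordering does not change the total utility, so the gain of sigma over
   A is Sum_s (beta^s - beta^L) (U_{A_sigma(s)} - U_{A_s}).  Every weight
   beta^s - beta^L is nonnegative and every utility difference is at most 1,
   so the gain is at most Sum_s beta^s - L beta^L <= (1 - beta^L) Sum_s beta^s,
   which is (1 - beta^L)^2 / (1 - beta). *)

Section PermutationGain.

Variable R : realFieldType.

Lemma sumr_perm n (x : 'I_n -> R) (sigma : 'S_n) :
  \sum_(s < n) x (sigma s) = \sum_(s < n) x s.
Proof. by rewrite [RHS](reindex_inj (@perm_inj _ sigma)). Qed.

Lemma perm_gain_shift n (w x : 'I_n -> R) (c : R) (sigma : 'S_n) :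
  \sum_(s < n) w s * x (sigma s) - \sum_(s < n) w s * x s =
  \sum_(s < n) (w s - c) * (x (sigma s) - x s).
Proof.
have -> : \sum_(s < n) (w s - c) * (x (sigma s) - x s) =
    \sum_(s < n) (w s * x (sigma s) - w s * x s)
    - c * (\sum_(s < n) x (sigma s) - \sum_(s < n) x s).
  by rewrite mulrBr !mulr_sumr -!sumrB; apply: eq_bigr => s _; ring.
by rewrite sumr_perm subrr mulr0 subr0 sumrB.
Qed.

Lemma perm_gain_le n (w x : 'I_n -> R) (c : R) (sigma : 'S_n) :
  (forall s, c <= w s) -> (forall s, 0 <= x s <= 1) ->
  \sum_(s < n) w s * x (sigma s) - \sum_(s < n) w s * x s
    <= \sum_(s < n) (w s - c).
Proof.
move=> c_le_w x01; rewrite (perm_gain_shift _ _ c).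
apply: ler_sum => s _; rewrite -[leRHS]mulr1.
apply: ler_wpM2l; first by rewrite subr_ge0.
have /andP[_ x_le1] := x01 (sigma s); have /andP[x_ge0 _] := x01 s.
by rewrite lerBlDr (le_trans x_le1) // lerDl.
Qed.

Lemma geometric_sum (b : R) n :
  b != 1 -> \sum_(s < n) b ^+ s = (1 - b ^+ n) / (1 - b).
Proof.
move=> b_neq1; have b_sub_neq0 : 1 - b != 0 by rewrite subr_eq0 eq_sym.
have -> : 1 - b ^+ n = (1 - b) * \sum_(s < n) b ^+ s.
  by rewrite -opprB subrX1 -mulNr opprB.
by rewrite mulrAC divff // mul1r.
Qed.

Lemma geometric_sum_le_nat (b : R) n :
  0 <= b <= 1 -> \sum_(s < n) b ^+ s <= n%:R.
Proof.
case/andP=> b_ge0 b_le1; rewrite -[in n%:R](card_ord n) -sumr_const.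
by apply: ler_sum => s _; rewrite exprn_ile1.
Qed.

Lemma geometric_sum_sub_le (b : R) n :
  0 <= b <= 1 ->
  \sum_(s < n) (b ^+ s - b ^+ n) <= (1 - b ^+ n) * \sum_(s < n) b ^+ s.
Proof.
move=> b01; have /andP[b_ge0 _] := b01.
rewrite sumrB sumr_const card_ord -mulr_natl mulrBl mul1r lerD2l lerN2 mulrC.
by rewrite ler_wpM2r ?exprn_ge0 ?geometric_sum_le_nat.
Qed.

End PermutationGain.

Theorem mainTheorem12 (R : realFieldType) (K L : nat) (beta : R) (U : 'I_K -> R)
  (hbeta : 0 < beta < 1)
  (hU01 : forall k, 0 <= U k <= 1)
  (hUmono : forall i j : 'I_K, (i <= j)%N -> U j <= U i)
  (hL : ~~ odd L)
  (A : 'I_L -> 'I_K) :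
  \big[Order.max/Vseq beta U A]_(sigma : 'S_L) Vperm beta U sigma A
    <= Vseq beta U A + (1 - beta ^+ L) ^+ 2 / (1 - beta).
Proof.
case/andP: hbeta => b_gt0 b_lt1.
have b01 : 0 <= beta <= 1 by rewrite !ltW.
have bound_eq : (1 - beta ^+ L) ^+ 2 / (1 - beta)
    = (1 - beta ^+ L) * \sum_(s < L) beta ^+ s.
  by rewrite geometric_sum ?lt_eqF // expr2 mulrA.
apply/bigmax_leP; split.
  rewrite lerDl bound_eq mulr_ge0 ?sumr_ge0 // => [|s _].
    by rewrite subr_ge0 exprn_ile1 ?ltW.
  by rewrite exprn_ge0 ?ltW.
move=> sigma _; rewrite -lerBlDl bound_eq.
apply: le_trans (geometric_sum_sub_le L b01).
apply: perm_gain_le => [s|s]; last exact: hU01.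
by rewrite ler_wiXn2l ?ltW // ltnW.
Qed.
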